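(* Let $G$ be a graph with vertex set $V$ and let $\mu$ be any probability distribution over subsets of $V$. Let $H_\mu$ be the graph on $V$ with edge weights $H_\mu(u,v)=\Pr_{S\sim\mu}[u,v\in S]$. Then $$\mathsf{inter}_G(H_\mu)\ge\mathbb E_{S\sim\mu,\,S'\sim\mu}\left[\mathsf{inter}_G(K_{|S\cap S'|})\right],$$ where $S,S'$ are independent and $K_m$ denotes the unit-weighted complete graph on $m$ vertices.
   Context: $\mathcal P_{uv}$ is the set of paths in $G$ between $u,v$. A flow is $F:\bigcup\mathcal P_{uv}\to[0,\infty)$ with $F[u,v]=\sum_{p\in\mathcal P_{uv}}F(p)$. $\mathsf{inter}(F)=\sum_{(u,v,u',v'):|\{u,v,u',v'\}|=4}\sum_{p\in\mathcal P_{uv},p'\in\mathcal P_{u'v'}}\sum_{x\in p\cap p'}F(p)F(p')$. For a graph $H$ with edge weights $w$, an $H$-flow in $G$ is a flow $F$ with an injective $\phi:V(H)\to V$ such that $F[\phi(u),\phi(v)]\ge w(u,v)$ for every edge $\{u,v\}$ of $H$; unit-weighted means all weights are $1$. $\mathsf{inter}_G(H)$ is the minimum of $\mathsf{inter}(F)$ over $H$-flows $F$ in $G$. *)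

From HB Require Import structures.
From mathcomp Require Import all_boot all_order all_algebra.
From mathcomp Require Import boolp classical_sets reals constructive_ereal ereal.
Set Implicit Arguments. Unset Strict Implicit. Unset Printing Implicit Defensive.
Import Order.TTheory GRing.Theory Num.Theory.
Local Open Scope ring_scope.
Local Open Scope classical_set_scope.

Section Flows.
Variables (R : realType) (V : finType) (e : rel V).

Definition is_gpath (u v : V) (p : seq V) : bool :=
  match p with
  | [::] => false
  | x :: q => [&& x == u, last x q == v, path e x q & uniq p]
  end.

(* \sum_{p in P_uv} f p.  Simple paths have at most #|V| vertices, so each
   one occurs exactly once as a k-tuple with k <= #|V|. *)
Definition psum (u v : V) (f : seq V -> R) : R :=
  \sum_(k < #|V|.+1) \sum_(t : k.-tuple V | is_gpath u v t) f t.

Definition fval (F : seq V -> R) (u v : V) : R := psum u v F.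

(* A flow: nonnegative function on paths.  Paths are undirected objects, so
   a path and its reversal are the same path: F p = F (rev p). *)
Definition is_flow (F : seq V -> R) : Prop :=
  (forall p, 0 <= F p) /\ (forall p, F p = F (rev p)).

Definition inter (F : seq V -> R) : R :=
  \sum_(u : V) \sum_(v : V) \sum_(u' : V) \sum_(v' : V)
    (if #|[set u; v; u'; v']| == 4%N then
       psum u v (fun p => psum u' v' (fun p' =>
         \sum_(x : V | (x \in p) && (x \in p')) F p * F p'))
     else 0).

Definition is_Hflow (VH : finType) (EH : rel VH) (w : VH -> VH -> R)
    (F : seq V -> R) : Prop :=
  is_flow F /\
  exists phi : VH -> V, injective phi /\
    forall x y, EH x y -> w x y <= fval F (phi x) (phi y).

(* inter_G(H): infimum (+oo if there is no H-flow) of inter over H-flows. *)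
Definition interG (VH : finType) (EH : rel VH) (w : VH -> VH -> R) : \bar R :=
  ereal_inf [set (inter F)%:E | F in [set F | is_Hflow EH w F]].

Definition interK (m : nat) : \bar R :=
  interG (fun i j : 'I_m => i != j) (fun _ _ => 1).

Definition Hmu_w (mu : {set V} -> R) (u v : V) : R :=
  \sum_(S : {set V} | (u \in S) && (v \in S)) mu S.

Definition interHmu (mu : {set V} -> R) : \bar R :=
  interG (fun u v : V => u != v) (Hmu_w mu).

End Flows.

(* Given an H_mu-flow F with embedding phi and a set T, keep only the paths of
   F joining phi x and phi y for distinct x, y in T, each scaled by
   1 / F[phi x, phi y].  If T lies inside some S with mu(S) > 0, then
   F[phi x, phi y] >= H_mu(x, y) >= mu(S) > 0 and this is a K_|T|-flow.
   Rescaling a flow on each endpoint pair multiplies each term of inter by the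
   product of the two scalings, and averaging over T = S :&: S' with weight
   mu(S) mu(S') bounds that product, for each pair of endpoint pairs, by
   H_mu(x, y) / F[phi x, phi y] * H_mu(x', y') / F[phi x', phi y'] <= 1. *)
From HB Require Import structures.
From mathcomp Require Import all_boot all_order all_algebra.
From mathcomp Require Import boolp classical_sets reals constructive_ereal ereal.
From mathcomp Require Import ring.
Set Implicit Arguments. Unset Strict Implicit. Unset Printing Implicit Defensive.
Import Order.TTheory GRing.Theory Num.Theory.
Local Open Scope ring_scope.

Lemma divr_le1 (R : realFieldType) (a b : R) : 0 <= a -> a <= b -> a / b <= 1.
Proof.
move=> a_ge0 le_ab; have [->|b_neq0] := eqVneq b 0; first by rewrite invr0 mulr0.
by rewrite ler_pdivrMr ?mul1r // lt_def b_neq0 (le_trans a_ge0).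
Qed.

Section Reweighting.
Variables (R : realType) (V : finType) (e : rel V).
Implicit Types (F f g : seq V -> R) (c : V -> V -> R) (u v : V).

Lemma eq_psum u v f g :
  (forall p, is_gpath e u v p -> f p = g p) -> psum e u v f = psum e u v g.
Proof. by move=> eq_fg; apply: eq_bigr => k _; apply: eq_bigr => t /eq_fg. Qed.

Lemma psumZ u v a f : psum e u v (fun p => a * f p) = a * psum e u v f.
Proof. by rewrite /psum mulr_sumr; apply: eq_bigr => k _; rewrite mulr_sumr. Qed.

Lemma psum_ge0 u v f : (forall p, 0 <= f p) -> 0 <= psum e u v f.
Proof. by move=> f_ge0; do 2![apply: sumr_ge0 => ? _]. Qed.

Definition cross_inter F u v u' v' : R :=
  psum e u v (fun p => psum e u' v' (fun p' =>
    \sum_(x : V | (x \in p) && (x \in p')) F p * F p')).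

Lemma cross_inter_ge0 F u v u' v' :
  (forall p, 0 <= F p) -> 0 <= cross_inter F u v u' v'.
Proof.
by move=> F_ge0; do 2!apply: psum_ge0 => ?; apply: sumr_ge0 => x _; rewrite mulr_ge0.
Qed.

Definition reweight c F (p : seq V) : R :=
  if p is x :: q then c x (last x q) * F p else 0.

Lemma reweight_gpath c F u v p :
  is_gpath e u v p -> reweight c F p = c u v * F p.
Proof. by case: p => [|x q] //= /and4P[/eqP-> /eqP-> _ _]. Qed.

Lemma fval_reweight c F u v : fval e (reweight c F) u v = c u v * fval e F u v.
Proof. by rewrite /fval -psumZ; apply: eq_psum => p /reweight_gpath. Qed.

Lemma is_flow_reweight c F :
  (forall u v, 0 <= c u v) -> (forall u v, c u v = c v u) ->
  is_flow F -> is_flow (reweight c F).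
Proof.
move=> c_ge0 c_sym [F_ge0 F_rev]; split=> [[|x q] //=|]; first exact: mulr_ge0.
case=> [|x q] //; case/lastP: q => [|q y] //=.
by rewrite rev_cons rev_rcons /= !last_rcons c_sym F_rev rev_cons rev_rcons.
Qed.

Lemma inter_reweight c F :
  inter e (reweight c F) =
  \sum_u \sum_v \sum_u' \sum_v'
    (if #|[set u; v; u'; v']%classic| == 4%N
     then c u v * c u' v' * cross_inter F u v u' v' else 0).
Proof.
rewrite /inter; do 4!apply: eq_bigr => ? _; case: ifP => // _.
rewrite /cross_inter -psumZ; apply: eq_psum => p /reweight_gpath->.
rewrite -mulrA -2!psumZ; apply: eq_psum => p' /reweight_gpath->.
rewrite !mulr_sumr; apply: eq_bigr => x _; ring.
Qed.

Lemma sum_mulr_sum (I J : finType) (a : I -> R) (g : I -> J -> R) :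
  \sum_i a i * \sum_j g i j = \sum_j \sum_i a i * g i j.
Proof. by rewrite exchange_big; apply: eq_bigr => i _; rewrite mulr_sumr. Qed.

Lemma inter_reweight_avg (I : finType) (w : I -> R) (c : I -> V -> V -> R) F :
  (forall i, 0 <= w i) -> (forall p, 0 <= F p) ->
  (forall u v u' v', \sum_i w i * (c i u v * c i u' v') <= 1) ->
  \sum_i w i * inter e (reweight (c i) F) <= inter e F.
Proof.
move=> w_ge0 F_ge0 avg_le1.
under eq_bigr => i _ do rewrite inter_reweight.
do 4![rewrite sum_mulr_sum; apply: ler_sum => ? _].
case: ifP => _; last by rewrite big1 // => i _; rewrite mulr0.
under eq_bigr => i _ do rewrite mulrA.
by rewrite -mulr_suml ler_piMl ?cross_inter_ge0.
Qed.

End Reweighting.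

Lemma mu_le_Hmu_w (R : realType) (V : finType) (mu : {set V} -> R)
    (S : {set V}) (x y : V) :
  (forall S, 0 <= mu S) -> x \in S -> y \in S -> mu S <= Hmu_w mu x y.
Proof.
move=> mu_ge0 xS yS; rewrite /Hmu_w (bigD1 S) ?xS ?yS //=.
by rewrite lerDl sumr_ge0.
Qed.

Lemma Hmu_wC (R : realType) (V : finType) (mu : {set V} -> R) x y :
  Hmu_w mu x y = Hmu_w mu y x.
Proof. by apply: eq_bigl => S; rewrite andbC. Qed.

Section SplitHmuFlow.
Variables (R : realType) (V : finType) (e : rel V) (mu : {set V} -> R).
Hypothesis mu_ge0 : forall S, 0 <= mu S.
Variables (F : seq V -> R) (phi : V -> V).
Hypotheses (F_flow : is_flow F) (phi_inj : injective phi).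
Hypothesis F_Hmu : forall x y, x != y -> Hmu_w mu x y <= fval e F (phi x) (phi y).
Implicit Types (S T : {set V}) (a b x y : V).

Let psi := invF phi_inj.
Let psiK : cancel psi phi := f_invF phi_inj.
Let phiK : cancel phi psi := invF_f phi_inj.

(* For a flow F[a,b] = F[b,a]; taking the minimum makes the symmetry free. *)
Definition fmin (a b : V) : R := Num.min (fval e F a b) (fval e F b a).

Lemma fminC a b : fmin a b = fmin b a.
Proof. by rewrite /fmin minC. Qed.

Lemma fmin_ge0 a b : 0 <= fmin a b.
Proof. by case: F_flow => F_ge0 _; rewrite le_min !psum_ge0. Qed.

Lemma Hmu_w_le_fmin x y : x != y -> Hmu_w mu x y <= fmin (phi x) (phi y).
Proof.
by move=> neq_xy; rewrite le_min F_Hmu // Hmu_wC F_Hmu // eq_sym.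
Qed.

Definition pair_in (T : {set V}) (a b : V) : bool :=
  [&& psi a \in T, psi b \in T & a != b].

Definition restrict_weight (T : {set V}) (a b : V) : R :=
  if pair_in T a b then (fmin a b)^-1 else 0.

Definition restrict_flow (T : {set V}) : seq V -> R :=
  reweight (restrict_weight T) F.

Lemma restrict_weight_ge0 T a b : 0 <= restrict_weight T a b.
Proof. by rewrite /restrict_weight; case: ifP; rewrite ?invr_ge0 ?fmin_ge0. Qed.

Lemma restrict_weightC T a b : restrict_weight T a b = restrict_weight T b a.
Proof. by rewrite /restrict_weight /pair_in fminC eq_sym; do 2!case: (_ \in T). Qed.

Lemma restrict_weightS T T' a b :
  T \subset T' -> restrict_weight T a b <= restrict_weight T' a b.
Proof.
move=> /fintype.subsetP sub_TT'; rewrite /restrict_weight /pair_in.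
case: andP => [[/sub_TT'-> /andP[/sub_TT'-> ->]]|_] //.
by case: ifP; rewrite ?invr_ge0 ?fmin_ge0.
Qed.

Lemma is_flow_restrict_flow T : is_flow (restrict_flow T).
Proof.
exact: is_flow_reweight (restrict_weight_ge0 T) (restrict_weightC T) F_flow.
Qed.

Lemma sum_mu_restrict_weight_le1 a b :
  \sum_S mu S * restrict_weight S a b <= 1.
Proof.
rewrite /restrict_weight; under eq_bigr => S _ do rewrite (fun_if (GRing.mul _)) mulr0.
rewrite -big_mkcond -mulr_suml /=; apply: divr_le1; first exact: sumr_ge0.
have [<-|neq_ab] := eqVneq a b.
  by rewrite big_pred0 ?fmin_ge0 // => S; rewrite /pair_in eqxx !andbF.
have -> : \sum_(S | pair_in S a b) mu S = Hmu_w mu (psi a) (psi b).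
  by apply: eq_bigl => S; rewrite /pair_in neq_ab andbT.
by have := @Hmu_w_le_fmin (psi a) (psi b); rewrite !psiK (can_eq psiK); apply.
Qed.

Lemma restrict_weight_avg_le1 u v u' v' :
  \sum_S \sum_S' mu S * mu S' *
    (restrict_weight (S :&: S') u v * restrict_weight (S :&: S') u' v') <= 1.
Proof.
apply: le_trans (_ : \sum_S \sum_S'
    mu S * restrict_weight S u v * (mu S' * restrict_weight S' u' v') <= _).
  do 2![apply: ler_sum => ? _]; rewrite mulrACA.
  apply: ler_pM; rewrite ?mulr_ge0 ?restrict_weight_ge0 //;
    by rewrite ler_wpM2l ?restrict_weightS ?subsetIl ?subsetIr.
rewrite -[1]mulr1; under eq_bigr => S _ do rewrite -mulr_sumr.
rewrite -mulr_suml ler_pM ?sum_mu_restrict_weight_le1 //;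
  by apply: sumr_ge0 => S _; rewrite mulr_ge0 ?restrict_weight_ge0.
Qed.

Lemma restrict_flow_avg :
  \sum_S \sum_S' mu S * mu S' * inter e (restrict_flow (S :&: S')) <= inter e F.
Proof.
rewrite (pair_bigA _ (fun S S' => mu S * mu S' * inter e (restrict_flow (S :&: S')))).
apply: inter_reweight_avg => [P|p|u v u' v']; first by rewrite mulr_ge0.
  by case: F_flow.
rewrite -(pair_bigA _ (fun S S' => mu S * mu S' *
  (restrict_weight (S :&: S') u v * restrict_weight (S :&: S') u' v'))).
exact: restrict_weight_avg_le1.
Qed.

Lemma restrict_flow_Kflow S T : T \subset S -> 0 < mu S ->
  is_Hflow e (fun i j : 'I_#|T| => i != j) (fun _ _ => 1) (restrict_flow T).
Proof.
move=> /fintype.subsetP sub_TS mu_gt0; split; first exact: is_flow_restrict_flow.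
exists (phi \o enum_val); split=> [i j /phi_inj/enum_val_inj //|i j neq_ij /=].
have [xT yT] := (enum_valP i, enum_valP j).
set x := enum_val i in xT *; set y := enum_val j in yT *.
have neq_xy : x != y by apply: contra neq_ij => /eqP/enum_val_inj->.
have fmin_gt0 : 0 < fmin (phi x) (phi y).
  apply: lt_le_trans mu_gt0 (le_trans _ (Hmu_w_le_fmin neq_xy)).
  by apply: mu_le_Hmu_w; rewrite ?sub_TS.
rewrite fval_reweight /restrict_weight /pair_in !phiK xT yT (inj_eq phi_inj) neq_xy /=.
by rewrite mulrC ler_pdivlMr // mul1r ge_min lexx.
Qed.

Lemma interK_le_restrict_flow S S' :
  ((mu S * mu S')%:E * @interK R V e #|S :&: S'| <=
   (mu S * mu S' * inter e (restrict_flow (S :&: S')))%:E)%E.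
Proof.
have [->|mu_neq0] := eqVneq (mu S * mu S') 0; first by rewrite mul0e mul0r.
have mu_gt0 : 0 < mu S.
  by rewrite lt_def mu_ge0 andbT; apply: contra mu_neq0 => /eqP->; rewrite mul0r.
rewrite (EFinM (mu S * mu S')); apply: lee_wpmul2l; first by rewrite lee_fin mulr_ge0.
apply: ge_ereal_inf; exists (inter e (restrict_flow (S :&: S')))%:E => //.
by exists (restrict_flow (S :&: S'));
  first exact: restrict_flow_Kflow (subsetIl S S') mu_gt0.
Qed.

End SplitHmuFlow.

Theorem lemma3p7 (R : realType) (V : finType) (e : rel V)
  (e_sym : symmetric e) (e_irr : irreflexive e)
  (mu : {set V} -> R) (mu_ge0 : forall S, 0 <= mu S)
  (mu_sum1 : \sum_(S : {set V}) mu S = 1) :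
  (\sum_(S : {set V}) \sum_(S' : {set V})
      ((mu S * mu S')%:E * @interK R V e #|S :&: S'|) <= @interHmu R V e mu)%E.
Proof.
apply: le_ereal_inf_tmp => _ [F /= [F_flow [phi [phi_inj F_Hmu]]] <-].
apply: le_trans (_ : \sum_S \sum_S'
    (mu S * mu S' * inter e (restrict_flow e F phi_inj (S :&: S')))%:E <= _)%E.
  by do 2![apply: lee_sum => ? _]; apply: interK_le_restrict_flow.
under eq_bigr => S _ do rewrite sumEFin.
by rewrite sumEFin lee_fin restrict_flow_avg.
Qed.
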